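(* Let $d,k$ be positive integers, $N=d^k$, and let $A\in\mathbb{Z}_{\geq0}^{N\times d}$ be an $(N,d)$-complete consecutive integers matrix. Then $A$ is completely mixable and $$\gamma(A)=\beta(A)=d+\sum_{i=0}^{d-1}\sum_{j=1}^{k} i\cdot d^{j-1}=:a_d(k).$$
   Context: For $A\in\mathbb{R}^{m\times d}$ and $\Pi=(\pi_1,\dots,\pi_d)\in\mathfrak{S}(m)^d$ (where $\mathfrak{S}(m)$ is the symmetric group on $\{1,\dots,m\}$), $A^\Pi$ denotes the matrix with $A^\Pi_{i,j}=A_{\pi_j^{-1}(i),j}$. Define $\gamma(A)=\min_{\Pi}\max_{i}\sum_{j=1}^d A^\Pi_{i,j}$ and $\beta(A)=\max_{\Pi}\min_{i}\sum_{j=1}^d A^\Pi_{i,j}$; $A$ is completely mixable if $\gamma(A)=\beta(A)$. For $d,N\in\mathbb{Z}_{\geq0}$ let $a=(1,\dots,N)^\top$; any matrix $A^\Pi$ obtained from $(a,\dots,a)\in\mathbb{Z}^{N\times d}$ by permutations $\Pi\in\mathfrak{S}(N)^d$ of the columns' entries is called an $(N,d)$-complete consecutive integers matrix. *)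

From mathcomp Require Import all_boot all_algebra all_fingroup.
Set Implicit Arguments. Unset Strict Implicit. Unset Printing Implicit Defensive.

Definition colperm_mx (m d : nat) (A : 'M[nat]_(m, d))
  (P : {ffun 'I_d -> {perm 'I_m}}) : 'M[nat]_(m, d) :=
  \matrix_(i < m, j < d) A ((P j)^-1%g i) j.

Definition rowsum (m d : nat) (A : 'M[nat]_(m, d)) (i : 'I_m) : nat :=
  \sum_(j < d) A i j.

Definition rowmax (m d : nat) (A : 'M[nat]_(m, d)) : nat :=
  \max_(i < m) rowsum A i.

(* min over rows; the seed rowmax A is >= every row sum, so for m > 0
   this is exactly the minimum row sum. *)
Definition rowmin (m d : nat) (A : 'M[nat]_(m, d)) : nat :=
  \big[minn/rowmax A]_(i < m) rowsum A i.

Definition idperms (m d : nat) : {ffun 'I_d -> {perm 'I_m}} := [ffun=> 1%g].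

(* gamma(A) = min_Pi max_i sum_j A^Pi_{i,j}; seed is the value at the
   identity Pi, itself a candidate, so this is exactly the minimum. *)
Definition gamma (m d : nat) (A : 'M[nat]_(m, d)) : nat :=
  \big[minn/rowmax (colperm_mx A (idperms m d))]_(P : {ffun 'I_d -> {perm 'I_m}})
     rowmax (colperm_mx A P).

Definition beta (m d : nat) (A : 'M[nat]_(m, d)) : nat :=
  \max_(P : {ffun 'I_d -> {perm 'I_m}}) rowmin (colperm_mx A P).

Definition completely_mixable (m d : nat) (A : 'M[nat]_(m, d)) : Prop :=
  gamma A = beta A.

Definition consec_mx (N d : nat) : 'M[nat]_(N, d) := \matrix_(i < N, j < d) i.+1.

Definition complete_consecutive (N d : nat) (A : 'M[nat]_(N, d)) : Prop :=
  exists P : {ffun 'I_d -> {perm 'I_N}}, A = colperm_mx (consec_mx N d) P.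

Definition a_d (d k : nat) : nat :=
  d + \sum_(i < d) \sum_(1 <= j < k.+1) i * d ^ (j - 1).

From mathcomp Require Import all_boot all_algebra all_fingroup.
From mathcomp Require Import zify.

Set Implicit Arguments.
Unset Strict Implicit.
Unset Printing Implicit Defensive.

(* Every column permutation of A has the same total sum, so its largest row
   sum is at least, and its smallest row sum at most, the average row sum;
   hence a single column permutation with constant row sums c forces
   gamma A = beta A = c.  For N = d ^ k such a permutation is given by digit
   rotation: sending row r of column j to the number whose base-d digits are
   those of r shifted by j (mod d), every digit position of a row runs once
   through 0, ..., d - 1 across the d columns, so every row sum equals
   d + (0 + ... + (d - 1)) * (1 + d + ... + d ^ (k - 1)) = a_d d k. *)

Lemma bigminn_le (T : finType) (x : nat) (F : T -> nat) (y : T) :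
  \big[minn/x]_(i : T) F i <= F y.
Proof.
have : y \in index_enum T by rewrite mem_index_enum.
elim: (index_enum T) => [//|a s IH]; rewrite in_cons big_cons => /orP[/eqP ->|ys].
  exact: geq_minl.
exact: leq_trans (geq_minr _ _) (IH ys).
Qed.

Section ColumnPermutations.

Variables m d : nat.
Implicit Types (A : 'M[nat]_(m, d)) (P Q : {ffun 'I_d -> {perm 'I_m}}).

Lemma colperm_mxM A P Q :
  colperm_mx (colperm_mx A P) Q = colperm_mx A [ffun j => P j * Q j]%g.
Proof. by apply/matrixP => i j; rewrite !mxE ffunE invMg permM. Qed.

Lemma sum_rowsum_colperm A P :
  \sum_(i < m) rowsum (colperm_mx A P) i = \sum_(i < m) rowsum A i.
Proof.
rewrite /rowsum exchange_big [RHS]exchange_big; apply: eq_bigr => j _ /=.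
rewrite [RHS](reindex_inj (@perm_inj _ (P j)^-1%g)).
by apply: eq_bigr => i _; rewrite mxE.
Qed.

Lemma rowsum_le_rowmax A i : rowsum A i <= rowmax A.
Proof. exact: leq_bigmax. Qed.

Lemma rowmin_le_rowsum A i : rowmin A <= rowsum A i.
Proof. exact: bigminn_le. Qed.

Lemma gamma_beta_const_rowsum A P c : 0 < m ->
  (forall i, rowsum (colperm_mx A P) i = c) -> gamma A = c /\ beta A = c.
Proof.
move=> m_gt0 rowsP.
have total Q : \sum_(i < m) rowsum (colperm_mx A Q) i = m * c.
  rewrite sum_rowsum_colperm -(sum_rowsum_colperm A P).
  by under eq_bigr do rewrite rowsP; rewrite sum_nat_const card_ord.
have c_le_rowmax Q : c <= rowmax (colperm_mx A Q).
  rewrite -(leq_pmul2l m_gt0) -(total Q) -[X in _ <= X * _](card_ord m).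
  by rewrite -sum_nat_const leq_sum // => i _; apply: rowsum_le_rowmax.
have rowmin_le_c Q : rowmin (colperm_mx A Q) <= c.
  rewrite -(leq_pmul2l m_gt0) -(total Q) -[X in X * _ <= _](card_ord m).
  by rewrite -sum_nat_const leq_sum // => i _; apply: rowmin_le_rowsum.
have rowmaxP : rowmax (colperm_mx A P) <= c.
  by apply: (big_ind (leq^~ c)) => // [x y|i _]; rewrite ?geq_max ?rowsP // => ->.
have c_le_rowminP : c <= rowmin (colperm_mx A P).
  by apply: (big_ind (leq c)) => // [x y|i _]; rewrite ?leq_min ?rowsP // => ->.
rewrite /gamma /beta; split; apply/eqP; rewrite eqn_leq; apply/andP; split.
- by apply: leq_trans rowmaxP; apply: bigminn_le.
- by apply: (big_ind (leq c)) => // x y; rewrite leq_min => ->.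
- by apply: (big_ind (leq^~ c)) => // x y; rewrite geq_max => ->.
- by apply: leq_trans c_le_rowminP _; apply: leq_bigmax.
Qed.

End ColumnPermutations.

Lemma rowsum_colperm_consec N d P (i : 'I_N) :
  rowsum (colperm_mx (consec_mx N d) P) i = \sum_(j < d) ((P j)^-1%g i).+1.
Proof. by apply: eq_bigr => j _; rewrite !mxE. Qed.

Section DigitRotation.

Variable d : nat.
Hypothesis d_gt0 : 0 < d.

Fixpoint rot_digits (j k r : nat) : nat :=
  if k is k'.+1 then (r %% d + j) %% d + d * rot_digits j k' (r %/ d) else 0.

Lemma rot_digits_lt j k r : rot_digits j k r < d ^ k.
Proof.
elim: k r => [|k IH] r /=; first by rewrite expn0.
have low_lt := ltn_pmod (r %% d + j) d_gt0.
have high_le : d * (rot_digits j k (r %/ d)).+1 <= d * d ^ k.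
  by rewrite leq_mul2l IH orbT.
rewrite expnS; lia.
Qed.

Lemma rot_digits_inj j k : {in gtn (d ^ k) &, injective (rot_digits j k)}.
Proof.
elim: k => [|k IH] r r'; rewrite !inE /=.
  by rewrite expn0 !ltnS !leqn0 => /eqP -> /eqP ->.
move=> r_lt r'_lt eq_rot.
have eq_low : (r %% d + j) %% d = (r' %% d + j) %% d.
  move/(congr1 (modn^~ d)): eq_rot.
  by rewrite ![_ + d * _]addnC ![d * _]mulnC !modnMDl !modn_mod.
have eq_mod : r %% d = r' %% d.
  by apply/eqP; move/eqP: eq_low; rewrite eqn_modDr !modn_mod.
have eq_div : r %/ d = r' %/ d.
  apply: IH; rewrite ?inE ?ltn_divLR // -?expnSr //.
  by move/eqP: eq_rot; rewrite eq_low eqn_add2l eqn_mul2l gtn_eqF //= => /eqP.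
by rewrite (divn_eq r d) (divn_eq r' d) eq_mod eq_div.
Qed.

Lemma sum_rot_mod c : c < d -> \sum_(j < d) (c + j) %% d = \sum_(j < d) j.
Proof.
move=> c_lt; pose rot (j : 'I_d) : 'I_d := Ordinal (ltn_pmod (c + j) d_gt0).
have rot_inj : injective rot.
  move=> x y /(congr1 val) /= /eqP.
  by rewrite eqn_modDl !modn_small // => /eqP /val_inj.
by rewrite [RHS](reindex_inj rot_inj).
Qed.

Lemma sum_rot_digits k r :
  \sum_(j < d) rot_digits j k r = (\sum_(i < d) i) * \sum_(t < k) d ^ t.
Proof.
elim: k r => [|k IH] r /=; first by rewrite big1 // big_ord0 muln0.
rewrite big_split /= -big_distrr /= IH sum_rot_mod ?ltn_pmod //.
rewrite big_ord_recl expn0 mulnDr muln1 mulnCA big_distrr /=.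
by congr (_ + _ * _); apply: eq_bigr => t _; rewrite expnS.
Qed.

Definition rot_digits_ord k j (r : 'I_(d ^ k)) : 'I_(d ^ k) :=
  Ordinal (rot_digits_lt j k r).

Lemma rot_digits_ord_inj k j : injective (@rot_digits_ord k j).
Proof.
move=> r r' /(congr1 val) /= eq_rot; apply: val_inj.
exact: rot_digits_inj (ltn_ord r) (ltn_ord r') eq_rot.
Qed.

Definition rot_digits_perm k j : {perm 'I_(d ^ k)} := perm (@rot_digits_ord_inj k j).

Lemma rot_digits_permE k j (r : 'I_(d ^ k)) :
  val (rot_digits_perm k j r) = rot_digits j k r.
Proof. by rewrite permE. Qed.

End DigitRotation.

Lemma a_dE d k : a_d d k = d + (\sum_(i < d) i) * \sum_(t < k) d ^ t.
Proof.
rewrite /a_d big_distrl /=; congr (_ + _); apply: eq_bigr => i _.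
rewrite big_add1 /= big_mkord big_distrr /=.
by apply: eq_bigr => t _; rewrite subn1.
Qed.

Theorem theorem3 (d k : nat) (hd : 0 < d) (hk : 0 < k)
  (A : 'M[nat]_(d ^ k, d)) :
  complete_consecutive A ->
  completely_mixable A /\ gamma A = a_d d k /\ beta A = a_d d k.
Proof.
case=> P0 ->.
pose Q := [ffun j => (P0 j)^-1 * (rot_digits_perm hd k j)^-1]%g.
have rowsQ i : rowsum (colperm_mx (colperm_mx (consec_mx _ d) P0) Q) i = a_d d k.
  rewrite colperm_mxM rowsum_colperm_consec.
  under eq_bigr do rewrite !ffunE mulgA mulgV mul1g invgK rot_digits_permE -addn1.
  by rewrite big_split /= (sum_rot_digits hd) sum1_card card_ord a_dE addnC.
have N_gt0 : 0 < d ^ k by rewrite expn_gt0 hd.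
have [gammaE betaE] := gamma_beta_const_rowsum N_gt0 rowsQ.
by rewrite /completely_mixable gammaE betaE.
Qed.
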